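(* Let $n\geq 2$ be an integer and let $\psi,\phi$ be homogeneous and bi-Lipschitz (as defined in the context). Then the map $H:\mathbb{R}^{2\times n}\to\mathbb{R}^m$ defined in the context is bi-Lipschitz with respect to $d_{\mathcal{G}_{+}}$: there exist constants $0<a\leq b$ such that for all ${X},{Y}\in\mathbb{R}^{2\times n}$, $$a\, d_{\mathcal{G}_{+}}({X},{Y})\leq\|H({X})-H({Y})\|_\infty\leq b\, d_{\mathcal{G}_{+}}({X},{Y}).$$
   Context: For ${X}\in\mathbb{R}^{2\times n}$ with columns $x_1,\dots,x_n$, let $\bar{X}$ be its centralization, i.e. the point set with columns $x_j-\frac1n\sum_k x_k$. For $x=[a,b]\in\mathbb{R}^2$ write $x^\perp=[-b,a]$. If $\bar{X}=0$ set $H({X})=0_m$. Otherwise, writing $x_1,\dots,x_n$ for the columns of $\bar X$, define $$h_i=\psi\Big(\|x_i\|_2,\ \{\!\{\big(\tfrac{x_i\cdot x_j}{\|\bar X\|_F},\tfrac{x_i^\perp\cdot x_j}{\|\bar X\|_F},\|x_j\|_2\big)\mid j\in[n]\setminus\{i\}\}\!\}\Big),\qquad H({X})=\phi(\{\!\{h_i\mid i\in[n]\}\!\}).$$ For multisets $S=\{\!\{s_1,\dots,s_N\}\!\}$, $S'=\{\!\{s'_1,\dots,s'_N\}\!\}$ of vectors in a Euclidean space, $\mathcal{W}_\infty(S,S')=\min_{\tau\in S_N}\max_{i}\|s_i-s'_{\tau(i)}\|_\infty$. The function $\phi$ (on multisets of $n$ vectors) is bi-Lipschitz if there are $0<c_\phi\le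 C_\phi$ with $c_\phi\mathcal{W}_\infty(S,S')\le\|\phi(S)-\phi(S')\|_\infty\le C_\phi\mathcal{W}_\infty(S,S')$; the function $\psi$ (on pairs of a vector and a multiset of $n-1$ vectors) is bi-Lipschitz if there are $0<c_\psi\le C_\psi$ with $c_\psi\max\{\|v-v'\|_\infty,\mathcal{W}_\infty(S,S')\}\le\|\psi(v,S)-\psi(v',S')\|_\infty\le C_\psi\max\{\|v-v'\|_\infty,\mathcal{W}_\infty(S,S')\}$. Homogeneity means $\phi(tS)=t\phi(S)$ and $\psi(tv,tS)=t\psi(v,S)$ for all $t>0$ (where $tS$ scales every element). The group $\mathcal{G}_{+}$ acts on $\mathbb{R}^{2\times n}$ by column permutations, a common proper rotation $R\in SO(2)$, and a common translation; $d_{\mathcal{G}_{+}}({X},{Y})=\min_{(\pi,R,t)\in S_n\times SO(2)\times\mathbb{R}^2}\big[\sum_j\|x_j-Ry_{\pi(j)}+t\|_2^2\big]^{1/2}$. *)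

From HB Require Import structures.
From mathcomp Require Import all_boot all_order all_algebra all_fingroup.
From mathcomp Require Import boolp classical_sets reals.
Set Implicit Arguments. Unset Strict Implicit. Unset Printing Implicit Defensive.
Import Order.TTheory GRing.Theory Num.Theory.
Local Open Scope ring_scope.

Section Defs.
Variable R : realType.

Definition normInf (k : nat) (v : 'rV[R]_k) : R := \big[Num.max/0]_(i < k) `|v 0 i|.

(* W_infinity distance between multisets of N vectors, given by enumerations *)
Definition Winf (N k : nat) (S S' : 'I_N -> 'rV[R]_k) : R :=
  let f := fun s : 'S_N => \big[Num.max/0]_(i < N) normInf (S i - S' (s i)) in
  \big[Num.min/f 1%g]_(s : 'S_N) f s.

(* phi : multisets of n vectors in R^d -> R^m (multiset given by an enumeration) *)
Definition phi_biLipschitz (n d m : nat) (phi : ('I_n -> 'rV[R]_d) -> 'rV[R]_m) :=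
  exists c C : R, 0 < c /\ c <= C /\ forall S S',
    c * Winf S S' <= normInf (phi S - phi S') /\ normInf (phi S - phi S') <= C * Winf S S'.

Definition phi_homogeneous (n d m : nat) (phi : ('I_n -> 'rV[R]_d) -> 'rV[R]_m) :=
  forall (t : R) S, 0 < t -> phi (fun i => t *: S i) = t *: phi S.

(* psi : (vector in R^p, multiset of N vectors in R^k) -> R^d *)
Definition psi_biLipschitz (p N k d : nat) (psi : 'rV[R]_p -> ('I_N -> 'rV[R]_k) -> 'rV[R]_d) :=
  exists c C : R, 0 < c /\ c <= C /\ forall v v' S S',
    c * Num.max (normInf (v - v')) (Winf S S') <= normInf (psi v S - psi v' S') /\
    normInf (psi v S - psi v' S') <= C * Num.max (normInf (v - v')) (Winf S S').

Definition psi_homogeneous (p N k d : nat) (psi : 'rV[R]_p -> ('I_N -> 'rV[R]_k) -> 'rV[R]_d) :=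
  forall (t : R) v S, 0 < t -> psi (t *: v) (fun i => t *: S i) = t *: psi v S.

Definition centralize (n : nat) (X : 'M[R]_(2, n)) : 'M[R]_(2, n) :=
  \matrix_(i, j) (X i j - (\sum_(k < n) X i k) / n%:R).

Definition norm2 (x : 'cV[R]_2) : R := Num.sqrt (x 0 0 ^+ 2 + x 1 0 ^+ 2).
Definition dot2 (x y : 'cV[R]_2) : R := x 0 0 * y 0 0 + x 1 0 * y 1 0.
Definition perp2 (x : 'cV[R]_2) : 'cV[R]_2 := \col_(i < 2) (if i == 0 then - x 1 0 else x 0 0).
Definition frob (n : nat) (X : 'M[R]_(2, n)) : R := Num.sqrt (\sum_(i < 2) \sum_(j < n) X i j ^+ 2).

Definition vec1 (a : R) : 'rV[R]_1 := \row_(k < 1) a.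
Definition vec3 (a b c : R) : 'rV[R]_3 :=
  \row_(k < 3) (if k == 0 :> nat then a else if k == 1 :> nat then b else c).

Definition Hmap (n d m : nat) (psi : 'rV[R]_1 -> ('I_n.-1 -> 'rV[R]_3) -> 'rV[R]_d)
    (phi : ('I_n -> 'rV[R]_d) -> 'rV[R]_m) (X : 'M[R]_(2, n)) : 'rV[R]_m :=
  let Xb := centralize X in
  if Xb == 0 then 0 else
  let F := frob Xb in
  phi (fun i : 'I_n =>
    psi (vec1 (norm2 (col i Xb)))
        (fun j : 'I_n.-1 =>
           let xj := col (lift i j) Xb in
           vec3 (dot2 (col i Xb) xj / F) (dot2 (perp2 (col i Xb)) xj / F) (norm2 xj))).

Definition SO2 (Q : 'M[R]_2) : Prop := Q *m Q^T = 1%:M /\ \det Q = 1.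

(* d_{G+}(X, Y): min over (pi, Q, t) in S_n x SO(2) x R^2 (taken as inf; it is attained) *)
Definition dGplus (n : nat) (X Y : 'M[R]_(2, n)) : R :=
  inf [set r | exists (s : 'S_n) (Q : 'M[R]_2) (t : 'cV[R]_2), SO2 Q /\
     r = Num.sqrt (\sum_(j < n)
           (let v := col j X - Q *m col (s j) Y + t in v 0 0 ^+ 2 + v 1 0 ^+ 2))].

End Defs.

From HB Require Import structures.
From mathcomp Require Import all_boot all_order all_algebra all_fingroup.
From mathcomp Require Import boolp classical_sets reals.
From mathcomp Require Import ring lra.
Import Order.TTheory GRing.Theory Num.Theory.
Local Open Scope ring_scope.
Set Implicit Arguments. Unset Strict Implicit. Unset Printing Implicit Defensive.

(* Both [dGplus] and [Hmap] are invariant under the group, so configurations are compared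
   after centring, along a matching [s] and a rotation [Q].
   Upper bound: along [s] and [Q], every norm and every normalised product
   (x_i . x_j / |X|_F, x_i^perp . x_j / |X|_F) moves by at most three times the matching
   distance (rotations preserve both products), so the upper Lipschitz bounds of psi and
   phi give |H X - H Y| <= 3 C_phi C_psi d(X, Y).
   Lower bound: the lower bounds of phi and psi give a matching [tau] under which norms and
   neighbour multisets are delta-close, delta = |H X - H Y| / (c_phi c_psi).  Anchor at a
   point x_i0 of largest norm N >= |X|_F / n.  If N <= delta, all points are O(delta).
   Otherwise rotate y_(s i0) onto the direction of x_i0: as x_i0, x_i0^perp is an orthogonal
   frame of length N, the two products with x_i0 determine every x_j, and undoing the
   normalisation by |X|_F costs a factor O(n); hence d(X, Y) <= 6 n^2 delta.
   Homogeneity is only needed to make the convention H X = 0 when [centralize X = 0]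
   agree with the general formula. *)

Section RealBounds.
Variable R : realDomainType.
Implicit Types a b : R.

Lemma le_of_sqr_le a b : 0 <= b -> a ^+ 2 <= b ^+ 2 -> a <= b.
Proof. by move=> b0 h; case: (lerP a b) => // ba; nra. Qed.

Lemma sqr_le_of_norm_le a b : `|a| <= b -> a ^+ 2 <= b ^+ 2.
Proof. by move=> h; rewrite -real_normK ?num_real //; have := normr_ge0 a; nra. Qed.

End RealBounds.

Section SqrtBounds.
Variable R : rcfType.
Implicit Types a c : R.

Lemma sqrtr_le a c : 0 <= c -> a <= c ^+ 2 -> Num.sqrt a <= c.
Proof. by move=> c0 /ler_wsqrtr; rewrite sqrtr_sqr ger0_norm. Qed.

Lemma sqrtr_ge a c : 0 <= c -> c ^+ 2 <= a -> c <= Num.sqrt a.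
Proof. by move=> c0 /ler_wsqrtr; rewrite sqrtr_sqr ger0_norm. Qed.

End SqrtBounds.

Section L2.
Variable R : rcfType.

Definition L2 n (f : 'I_n -> R) : R := Num.sqrt (\sum_(j < n) f j ^+ 2).

Variable n : nat.
Implicit Types f g : 'I_n -> R.

Lemma sumr_sqr_ge0 f : 0 <= \sum_(j < n) f j ^+ 2.
Proof. by apply: sumr_ge0 => j _; rewrite sqr_ge0. Qed.

Lemma L2_ge0 f : 0 <= L2 f.
Proof. exact: sqrtr_ge0. Qed.

Lemma L2_sqr f : L2 f ^+ 2 = \sum_(j < n) f j ^+ 2.
Proof. by rewrite sqr_sqrtr // sumr_sqr_ge0. Qed.

Lemma ler_L2 f g : (forall j, `|f j| <= g j) -> L2 f <= L2 g.
Proof.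
move=> fg; apply/ler_wsqrtr/ler_sum => j _.
exact: sqr_le_of_norm_le (fg j).
Qed.

Lemma norm_le_L2 f j : `|f j| <= L2 f.
Proof.
apply: sqrtr_ge => //; rewrite real_normK ?num_real // (bigD1 j) //= lerDl.
by apply: sumr_ge0 => i _; rewrite sqr_ge0.
Qed.

Lemma L2_le_const f (c : R) : 0 <= c -> (forall j, `|f j| <= c) -> L2 f <= n%:R * c.
Proof.
move=> c0 fc; apply: sqrtr_le; first by rewrite mulr_ge0 ?ler0n.
apply: le_trans (_ : \sum_(j < n) c ^+ 2 <= _).
  by apply: ler_sum => j _; apply: sqr_le_of_norm_le.
rewrite sumr_const card_ord -(mulr_natl (c ^+ 2)) exprMn.
apply: ler_wpM2r; first exact: sqr_ge0.
rewrite -natrX ler_nat; have [->|n_gt0] := posnP n; first by [].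
by rewrite expnS expn1 leq_pmull.
Qed.

Lemma L2_perm f (s : 'S_n) : L2 (fun j => f (s j)) = L2 f.
Proof. by rewrite /L2 [in RHS](reindex_inj (@perm_inj _ s)). Qed.

Lemma sqr_sumr_mul_le f g :
  (\sum_(j < n) f j * g j) ^+ 2 <= (\sum_(j < n) f j ^+ 2) * (\sum_(j < n) g j ^+ 2).
Proof.
set A := \sum_(j < n) f j ^+ 2; set B := \sum_(j < n) g j ^+ 2.
set C := \sum_(j < n) f j * g j.
have [B0|Bpos] := eqVneq B 0.
  have g0 j : g j = 0.
    apply/eqP; rewrite -sqrf_eq0; apply/eqP.
    by move/psumr_eq0P: B0 => -> // i _; rewrite sqr_ge0.
  by rewrite B0 mulr0 /C big1 ?expr0n // => j _; rewrite g0 mulr0.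
have Bgt0 : 0 < B by rewrite lt_def Bpos sumr_sqr_ge0.
have : 0 <= \sum_(j < n) (B * f j - C * g j) ^+ 2 by apply: sumr_sqr_ge0.
have -> : \sum_(j < n) (B * f j - C * g j) ^+ 2 = B * (A * B - C ^+ 2).
  rewrite (eq_bigr (fun j => B ^+ 2 * f j ^+ 2 - 2 * B * C * (f j * g j) + C ^+ 2 * g j ^+ 2));
    last by move=> j _; ring.
  by rewrite big_split sumrB /= -!mulr_sumr -/A -/B -/C; ring.
by rewrite pmulr_rge0 // subr_ge0 mulrC.
Qed.

Lemma sumr_mul_le_L2 f g : \sum_(j < n) f j * g j <= L2 f * L2 g.
Proof.
apply: le_trans (ler_norm _) _; rewrite -sqrtr_sqr -sqrtrM ?sumr_sqr_ge0 //.
exact/ler_wsqrtr/sqr_sumr_mul_le.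
Qed.

Lemma L2D_le f g : L2 (fun j => f j + g j) <= L2 f + L2 g.
Proof.
apply: sqrtr_le; first by rewrite addr_ge0 ?L2_ge0.
have -> : \sum_(j < n) (f j + g j) ^+ 2 =
    \sum_(j < n) f j ^+ 2 + 2 * \sum_(j < n) f j * g j + \sum_(j < n) g j ^+ 2.
  by rewrite mulr_sumr -!big_split /=; apply: eq_bigr => j _; ring.
by have := sumr_mul_le_L2 f g; rewrite -(L2_sqr f) -(L2_sqr g); nra.
Qed.

Lemma dist_L2_le f g : `|L2 f - L2 g| <= L2 (fun j => f j - g j).
Proof.
have tri f' g' : L2 f' <= L2 (fun j => f' j - g' j) + L2 g'.
  by apply: le_trans (L2D_le _ _); under eq_fun do rewrite subrK.
have symm : L2 (fun j => g j - f j) = L2 (fun j => f j - g j).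
  by congr Num.sqrt; apply: eq_bigr => j _; rewrite -opprB sqrrN.
rewrite ler_distl; apply/andP; split; last by have := tri f g; lra.
by have := tri g f; rewrite symm; lra.
Qed.

End L2.

Section Matrix2.
Variable R : comRingType.

Lemma det_mx22 (Q : 'M[R]_2) : \det Q = Q 0 0 * Q 1 1 - Q 0 1 * Q 1 0.
Proof.
rewrite (expand_det_row _ 0) !big_ord_recl big_ord0 /cofactor !det_mx11 !mxE /=.
have e1 (a : 'I_1) : lift (0 : 'I_2) a = 1 by apply/val_inj; case: a => [[]].
have e2 (a b : 'I_1) : lift (lift (0 : 'I_2) a) b = 0.
  by apply/val_inj; case: a => [[]] ?; case: b => [[]].
by rewrite !e2 !e1 /bump /= add0n expr0 expr1 mul1r mulN1r addr0 mulrN.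
Qed.

Lemma mulmx2E m p (A : 'M[R]_(m, 2)) (B : 'M[R]_(2, p)) i j :
  (A *m B) i j = A i 0 * B 0 j + A i 1 * B 1 j.
Proof.
rewrite mxE !big_ord_recl big_ord0 addr0.
by have -> : lift ord0 ord0 = 1 :> 'I_2 by apply/val_inj.
Qed.

Lemma ord2P (i : 'I_2) : i = 0 \/ i = 1.
Proof. by case: i => [[|[|]]] // ?; [left | right]; apply/val_inj. Qed.

End Matrix2.

Section Plane.
Variable R : realType.
Implicit Types (u v w : 'cV[R]_2) (a : R).

Lemma norm2_ge0 u : 0 <= norm2 u.
Proof. exact: sqrtr_ge0. Qed.

Lemma norm2_sqr u : norm2 u ^+ 2 = u 0 0 ^+ 2 + u 1 0 ^+ 2.
Proof. by rewrite sqr_sqrtr // addr_ge0 ?sqr_ge0. Qed.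

Lemma dot2_self u : dot2 u u = norm2 u ^+ 2.
Proof. by rewrite norm2_sqr /dot2 !expr2. Qed.

Lemma norm2_0 : norm2 (0 : 'cV[R]_2) = 0.
Proof. by rewrite /norm2 !mxE expr0n addr0 sqrtr0. Qed.

Lemma norm2N u : norm2 (- u) = norm2 u.
Proof. by rewrite /norm2 !mxE !sqrrN. Qed.

Lemma norm2Z a u : norm2 (a *: u) = `|a| * norm2 u.
Proof. by rewrite /norm2 !mxE -sqrtr_sqr -sqrtrM ?sqr_ge0 //; congr Num.sqrt; ring. Qed.

Lemma perp2E u : perp2 u 0 0 = - u 1 0 /\ perp2 u 1 0 = u 0 0.
Proof. by rewrite !mxE. Qed.

Lemma norm2_perp2 u : norm2 (perp2 u) = norm2 u.
Proof. by rewrite /norm2; have [-> ->] := perp2E u; congr Num.sqrt; ring. Qed.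

Lemma perp2B u v : perp2 (u - v) = perp2 u - perp2 v.
Proof. by apply/matrixP => i j; rewrite !mxE; case: ifP => _; rewrite ?mxE //; ring. Qed.

Lemma dot2_perp2_self u : dot2 (perp2 u) u = 0.
Proof. by rewrite /dot2; have [-> ->] := perp2E u; ring. Qed.

Lemma dot2C u v : dot2 u v = dot2 v u.
Proof. by rewrite /dot2; ring. Qed.

Lemma dot2DR u v w : dot2 u (v + w) = dot2 u v + dot2 u w.
Proof. by rewrite /dot2 !mxE; ring. Qed.

Lemma dot2BR u v w : dot2 u (v - w) = dot2 u v - dot2 u w.
Proof. by rewrite /dot2 !mxE; ring. Qed.

(* Lagrange's identity: [u] and [perp2 u] form an orthogonal frame of norm [norm2 u]. *)
Lemma norm2_mul_sqr u v :
  norm2 u ^+ 2 * norm2 v ^+ 2 = dot2 u v ^+ 2 + dot2 (perp2 u) v ^+ 2.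
Proof. by rewrite !norm2_sqr /dot2; have [-> ->] := perp2E u; ring. Qed.

Lemma norm_dot2_le u v : `|dot2 u v| <= norm2 u * norm2 v.
Proof.
apply: le_of_sqr_le; first by rewrite mulr_ge0 ?norm2_ge0.
by rewrite real_normK ?num_real // exprMn norm2_mul_sqr lerDl sqr_ge0.
Qed.

Lemma norm2D_le u v : norm2 (u + v) <= norm2 u + norm2 v.
Proof.
apply: le_of_sqr_le; first by rewrite addr_ge0 ?norm2_ge0.
rewrite -!dot2_self dot2DR ![dot2 (u + v) _]dot2C !dot2DR (dot2C v u) !dot2_self.
by have := le_trans (ler_norm _) (norm_dot2_le u v); nra.
Qed.

Lemma dist_norm2_le u v : `|norm2 u - norm2 v| <= norm2 (u - v).
Proof.
rewrite ler_distl; apply/andP; split.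
  by have := norm2D_le (v - u) u; rewrite subrK -opprB norm2N; lra.
by have := norm2D_le (u - v) v; rewrite subrK; lra.
Qed.

(* Also for [F = 0], where [x / 0 = 0]. *)
Lemma norm_dot2_div_le u v F : 0 <= F -> norm2 u <= F -> `|dot2 u v / F| <= norm2 v.
Proof.
move=> F0 uF; have [->|Fn0] := eqVneq F 0; first by rewrite invr0 mulr0 normr0 norm2_ge0.
have Fgt0 : 0 < F by rewrite lt_def Fn0.
rewrite normrM normfV (gtr0_norm Fgt0) ler_pdivrMr // mulrC.
exact: le_trans (norm_dot2_le u v) (ler_wpM2r (norm2_ge0 v) uF).
Qed.

Lemma dist_scaled_dot2_le u v u' v' F F' D :
  0 <= F -> 0 <= F' -> norm2 u <= F -> norm2 v <= F -> norm2 u' <= F' -> norm2 v' <= F' ->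
  `|F - F'| <= D -> norm2 (u - u') <= D -> norm2 (v - v') <= D ->
  `|dot2 u v / F - dot2 u' v' / F'| <= 3 * D.
Proof.
move=> F0 F'0 uF vF u'F' v'F' dF du dv.
have D0 : 0 <= D := le_trans (norm2_ge0 _) du.
have dnv := dist_norm2_le v v'.
have [FE|Fn0] := eqVneq F 0.
  rewrite FE invr0 mulr0 sub0r normrN.
  apply: le_trans (norm_dot2_div_le v' F'0 u'F') _.
  by move: dnv vF; rewrite FE ler_norml; lra.
have [F'E|F'n0] := eqVneq F' 0.
  rewrite F'E invr0 mulr0 subr0.
  apply: le_trans (norm_dot2_div_le v F0 uF) _.
  by move: dnv v'F'; rewrite F'E ler_norml; lra.
have Fgt0 : 0 < F by rewrite lt_def Fn0.
(* Split the error into a [v]-part and a [u]-part, the latter absorbing the change of scale. *)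
have -> : dot2 u v / F - dot2 u' v' / F' =
    dot2 u (v - v') / F + dot2 v' ((F' / F - 1) *: u + (u - u')) / F'.
  by rewrite dot2BR !(dot2C v') /dot2 !mxE; field; rewrite Fn0 F'n0.
apply: le_trans (ler_normD _ _) _.
have Hv := norm_dot2_div_le (v - v') F0 uF.
have Hu := norm_dot2_div_le ((F' / F - 1) *: u + (u - u')) F'0 v'F'.
have Hsum := norm2D_le ((F' / F - 1) *: u) (u - u').
have Hscale : norm2 ((F' / F - 1) *: u) <= D.
  rewrite norm2Z (_ : F' / F - 1 = (F' - F) / F); last by field.
  rewrite normrM normfV (gtr0_norm Fgt0) -mulrA [F^-1 * _]mulrC.
  apply: le_trans (_ : `|F' - F| * 1 <= _); last by rewrite mulr1 distrC.
  by apply: ler_wpM2l => //; rewrite ler_pdivrMr // mul1r.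
lra.
Qed.

End Plane.

Section Rotations.
Variable R : realType.
Implicit Types (u v x z : 'cV[R]_2) (Q : 'M[R]_2).

Definition rot2 (c s : R) : 'M[R]_2 :=
  \matrix_(i, j) if i == j then c else if i == 0 then - s else s.

Lemma rot2E c s :
  [/\ rot2 c s 0 0 = c, rot2 c s 0 1 = - s, rot2 c s 1 0 = s & rot2 c s 1 1 = c].
Proof. by rewrite !mxE. Qed.

Lemma SO2_rot2 c s : c ^+ 2 + s ^+ 2 = 1 -> SO2 (rot2 c s).
Proof.
move=> cs; have [e00 e01 e10 e11] := rot2E c s; split; last first.
  by rewrite det_mx22 e00 e01 e10 e11 -cs; ring.
apply/matrixP => i j; rewrite mulmx2E !mxE.
by case: (ord2P i) => ->; case: (ord2P j) => ->; rewrite /= ?e00 ?e01 ?e10 ?e11 -?cs; ring.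
Qed.

Lemma SO2P Q : SO2 Q -> exists c s, c ^+ 2 + s ^+ 2 = 1 /\ Q = rot2 c s.
Proof.
case=> QQt detQ; rewrite det_mx22 in detQ.
have entry i j : (Q *m Q^T) i j = (1%:M : 'M[R]_2) i j by rewrite QQt.
move: (entry 0 0) (entry 1 1); rewrite !mulmx2E !mxE /= ?mulr1n => E00 E11.
have : (Q 0 0 - Q 1 1) ^+ 2 + (Q 0 1 + Q 1 0) ^+ 2 = 0.
  have -> : (Q 0 0 - Q 1 1) ^+ 2 + (Q 0 1 + Q 1 0) ^+ 2 =
      (Q 0 0 * Q 0 0 + Q 0 1 * Q 0 1) + (Q 1 0 * Q 1 0 + Q 1 1 * Q 1 1)
      - 2 * (Q 0 0 * Q 1 1 - Q 0 1 * Q 1 0) by ring.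
  by rewrite E00 E11 detQ; ring.
move/eqP; rewrite paddr_eq0 ?sqr_ge0 // !sqrf_eq0 subr_eq0 addr_eq0 => /andP[/eqP d /eqP o].
exists (Q 0 0), (Q 1 0); split; first by rewrite -E00 o; ring.
by apply/matrixP => i j; rewrite !mxE; case: (ord2P i) => ->; case: (ord2P j) => ->;
  rewrite /= ?d ?o ?opprK.
Qed.

Lemma rot2_mulE c s v :
  (rot2 c s *m v) 0 0 = c * v 0 0 - s * v 1 0 /\ (rot2 c s *m v) 1 0 = s * v 0 0 + c * v 1 0.
Proof. by have [e00 e01 e10 e11] := rot2E c s; rewrite !mulmx2E e00 e01 e10 e11; split; ring. Qed.

Lemma SO2_1 : SO2 (1%:M : 'M[R]_2).
Proof. by split; rewrite ?mul1mx ?trmx1 ?det1. Qed.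

Lemma SO2_dot2 Q u v : SO2 Q -> dot2 (Q *m u) (Q *m v) = dot2 u v.
Proof.
case/SO2P => c [s [cs ->]]; rewrite /dot2.
by have [-> ->] := rot2_mulE c s u; have [-> ->] := rot2_mulE c s v; rewrite -[RHS]mul1r -cs; ring.
Qed.

Lemma SO2_norm2 Q u : SO2 Q -> norm2 (Q *m u) = norm2 u.
Proof.
move=> SQ; apply/eqP; rewrite -(@eqrXn2 _ 2) ?norm2_ge0 //.
by rewrite -!dot2_self SO2_dot2.
Qed.

Lemma SO2_dot2_perp2 Q u v : SO2 Q -> dot2 (perp2 (Q *m u)) (Q *m v) = dot2 (perp2 u) v.
Proof.
case/SO2P => c [s [cs ->]]; rewrite /dot2.
have [-> ->] := perp2E (rot2 c s *m u); have [-> ->] := perp2E u.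
by have [-> ->] := rot2_mulE c s u; have [-> ->] := rot2_mulE c s v; rewrite -[RHS]mul1r -cs; ring.
Qed.

(* The rotation taking the direction of [v] to that of [u]: its cosine and sine are the
   normalised [dot2] and [perp2]-products, which satisfy [c^2 + s^2 = 1] by Lagrange's identity. *)
Lemma SO2_align u v : 0 < norm2 u -> 0 < norm2 v ->
  exists Q, [/\ SO2 Q,
    forall z, dot2 u (Q *m z) = norm2 u / norm2 v * dot2 v z &
    forall z, dot2 (perp2 u) (Q *m z) = norm2 u / norm2 v * dot2 (perp2 v) z].
Proof.
move=> Ngt0 Mgt0; set N := norm2 u; set M := norm2 v.
have Nn0 : N != 0 by rewrite gt_eqF.
have Mn0 : M != 0 by rewrite gt_eqF.
have N2 : u 0 0 ^+ 2 + u 1 0 ^+ 2 = N ^+ 2 by rewrite norm2_sqr.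
set c := dot2 u v / (N * M); set s := - dot2 (perp2 u) v / (N * M).
have cs : c ^+ 2 + s ^+ 2 = 1.
  rewrite /c /s !expr_div_n sqrrN -mulrDl -norm2_mul_sqr -/N -/M -exprMn divff //.
  by rewrite expf_neq0 // mulf_neq0.
have NM : N / M = N ^+ 2 / (N * M) by field; rewrite Nn0 Mn0.
exists (rot2 c s); split=> [|z|z]; first exact: SO2_rot2;
  rewrite NM -N2 /dot2; have [-> ->] := rot2_mulE c s z;
  by rewrite /c /s /dot2 /perp2 !mxE /=; field; rewrite Nn0 Mn0.
Qed.

(* Lagrange's identity for [u] and [x - Q z]. *)
Lemma norm2_mul_sub_rot_le u v Q r :
  (forall z, dot2 u (Q *m z) = r * dot2 v z) ->
  (forall z, dot2 (perp2 u) (Q *m z) = r * dot2 (perp2 v) z) ->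
  forall x z, norm2 u * norm2 (x - Q *m z) <=
    `|dot2 u x - r * dot2 v z| + `|dot2 (perp2 u) x - r * dot2 (perp2 v) z|.
Proof.
move=> Qdot Qperp x z; apply: le_of_sqr_le; first by rewrite addr_ge0.
rewrite exprMn norm2_mul_sqr !dot2BR Qdot Qperp.
set a := _ - _; set b := _ - _.
rewrite -(real_normK (num_real a)) -(real_normK (num_real b)).
by have := normr_ge0 a; have := normr_ge0 b; nra.
Qed.

End Rotations.

Section Permutations.
Variable n : nat.

Lemma perm_unlift (s : 'S_n) (i : 'I_n) :
  exists sg : 'S_n.-1, forall j, lift (s i) (sg j) = s (lift i j).
Proof.
have ne j : s i != s (lift i j) by rewrite (inj_eq perm_inj) neq_lift.
pose f j := sval (unlift_some (ne j)).
have fE j : lift (s i) (f j) = s (lift i j).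
  by rewrite /f; case: (unlift_some (ne j)) => k /= -> _.
have f_inj : injective f.
  by move=> j1 j2 e; apply: (@lift_inj _ i); apply: (@perm_inj _ s); rewrite -!fE e.
by exists (perm f_inj) => j; rewrite permE fE.
Qed.

Lemma perm_lift (i k : 'I_n) (sg : 'S_n.-1) :
  exists s : 'S_n, s i = k /\ forall j, s (lift i j) = lift k (sg j).
Proof.
pose f x := if unlift i x is Some j then lift k (sg j) else k.
have f_inj : injective f.
  rewrite /f => a b; case: unliftP => [ja ->|->]; case: unliftP => [jb ->|->] //.
  - by move/lift_inj/perm_inj => ->.
  - by move=> e; have := neq_lift k (sg ja); rewrite e eqxx.
  - by move=> e; have := neq_lift k (sg jb); rewrite -e eqxx.
exists (perm f_inj); split; first by rewrite permE /f unlift_none.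
by move=> j; rewrite permE /f liftK.
Qed.

End Permutations.

Section SupNorm.
Variable R : realType.
Implicit Types a b B : R.

Lemma normInf_ge0 k (v : 'rV[R]_k) : 0 <= normInf v.
Proof. by apply: bigmax_ge_id. Qed.

Lemma normInf_le k (v : 'rV[R]_k) B : 0 <= B -> (forall i, `|v 0 i| <= B) -> normInf v <= B.
Proof. by move=> B0 vB; apply: bigmax_le. Qed.

Lemma normInf_ge k (v : 'rV[R]_k) i : `|v 0 i| <= normInf v.
Proof. exact: le_bigmax. Qed.

Lemma normInf_vec1 a b : normInf (vec1 a - vec1 b) = `|a - b|.
Proof.
apply/eqP; rewrite eq_le normInf_le ?normr_ge0 //=; last by case=> [[]] // ?; rewrite !mxE.
by have := normInf_ge (vec1 a - vec1 b) 0; rewrite !mxE.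
Qed.

Lemma normInf_vec3_le (a b c a' b' c' B : R) :
  `|a - a'| <= B -> `|b - b'| <= B -> `|c - c'| <= B ->
  normInf (vec3 a b c - vec3 a' b' c') <= B.
Proof.
move=> ha hb hc; apply: normInf_le => [|i]; first exact: le_trans (normr_ge0 _) ha.
by rewrite !mxE; case: i => [[|[|[|]]]].
Qed.

Lemma normInf_vec3_ge {a b c a' b' c' B : R} : normInf (vec3 a b c - vec3 a' b' c') <= B ->
  [/\ `|a - a'| <= B, `|b - b'| <= B & `|c - c'| <= B].
Proof.
have E i := le_trans (normInf_ge (vec3 a b c - vec3 a' b' c') i).
by move=> vB; move: (E _ 0 vB) (E _ 1 vB) (E _ 2 vB); rewrite !mxE.
Qed.

Lemma Winf_le N k (S S' : 'I_N -> 'rV[R]_k) (s : 'S_N) B :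
  0 <= B -> (forall i, normInf (S i - S' (s i)) <= B) -> Winf S S' <= B.
Proof.
move=> B0 SB; apply: le_trans (bigmax_le _ B0 (fun i _ => SB i)).
exact: bigmin_le.
Qed.

Lemma Winf_attained N k (S S' : 'I_N -> 'rV[R]_k) :
  exists s : 'S_N, forall i, normInf (S i - S' (s i)) <= Winf S S'.
Proof.
rewrite /Winf; set f := fun s : 'S_N => \big[Num.max/0]_(i < N) normInf (S i - S' (s i)).
have [s ->] : exists s, \big[Num.min/f 1%g]_(s0 : 'S_N) f s0 = f s.
  elim/big_ind: _ => [|a b [s1 ->] [s2 ->]|s _]; [by exists 1%g | | by exists s].
  by rewrite /Num.min /Order.min; case: ifP => _; [exists s1 | exists s2].
by exists s => i; exact: le_bigmax.
Qed.

End SupNorm.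

Section TwoLevelBounds.
Variables (R : realType) (n p N k d m : nat).
Variable psi : 'rV[R]_p -> ('I_N -> 'rV[R]_k) -> 'rV[R]_d.
Variable phi : ('I_n -> 'rV[R]_d) -> 'rV[R]_m.
Variables (v v' : 'I_n -> 'rV[R]_p) (S S' : 'I_n -> 'I_N -> 'rV[R]_k).

Lemma two_level_le (C1 C2 B : R) (s : 'S_n) :
  (forall T T', normInf (phi T - phi T') <= C1 * Winf T T') -> 0 <= C1 ->
  (forall a a' T T',
     normInf (psi a T - psi a' T') <= C2 * Num.max (normInf (a - a')) (Winf T T')) ->
  0 <= C2 -> 0 <= B ->
  (forall i, Num.max (normInf (v i - v' (s i))) (Winf (S i) (S' (s i))) <= B) ->
  normInf (phi (fun i => psi (v i) (S i)) - phi (fun i => psi (v' i) (S' i))) <= C1 * C2 * B.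
Proof.
move=> phiC C1_0 psiC C2_0 B0 hB; rewrite -mulrA; apply: le_trans (phiC _ _) _.
apply: ler_wpM2l => //.
apply: (Winf_le (s := s)) => [|i]; first exact: mulr_ge0.
by apply: le_trans (psiC _ _ _ _) _; apply: ler_wpM2l.
Qed.

Lemma two_level_ge (c1 c2 : R) :
  (forall T T', c1 * Winf T T' <= normInf (phi T - phi T')) -> 0 < c1 ->
  (forall a a' T T',
     c2 * Num.max (normInf (a - a')) (Winf T T') <= normInf (psi a T - psi a' T')) ->
  exists s : 'S_n, forall i,
    c1 * (c2 * Num.max (normInf (v i - v' (s i))) (Winf (S i) (S' (s i))))
      <= normInf (phi (fun i => psi (v i) (S i)) - phi (fun i => psi (v' i) (S' i))).
Proof.
move=> phic c1_0 psic.
have [s hs] := Winf_attained (fun i => psi (v i) (S i)) (fun i => psi (v' i) (S' i)).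
exists s => i; apply: le_trans (phic _ _); apply: ler_wpM2l; first exact: ltW.
exact: le_trans (psic _ _ _ _) (hs i).
Qed.

End TwoLevelBounds.

Section Centering.
Variables (R : realType) (n : nat).
Implicit Types (X Y : 'M[R]_(2, n)) (s : 'S_n) (Q : 'M[R]_2) (t : 'cV[R]_2).

Definition meanv X : 'cV[R]_2 := \col_k ((\sum_(l < n) X k l) / n%:R).

Lemma col_centralize X j : col j (centralize X) = col j X - meanv X.
Proof. by apply/matrixP => k l; rewrite !mxE. Qed.

Lemma sum_col_centralize X : (0 < n)%N -> \sum_(j < n) col j (centralize X) = 0.
Proof.
move=> n_gt0; apply/matrixP => k l; rewrite summxE !mxE.
under eq_bigr do rewrite !mxE.
rewrite sumrB sumr_const card_ord -[_ *+ n]mulr_natr divfK ?subrr //.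
by rewrite pnatr_eq0 -lt0n.
Qed.

Lemma L2_norm2_shift (w : 'I_n -> 'cV[R]_2) c : \sum_(j < n) w j = 0 ->
  L2 (fun j => norm2 (w j)) <= L2 (fun j => norm2 (w j + c)).
Proof.
move=> w0; apply/ler_wsqrtr.
have cross : \sum_(j < n) dot2 c (w j) = 0.
  have E k : \sum_(j < n) w j k 0 = 0 by rewrite -summxE w0 mxE.
  by rewrite /dot2 big_split /= -!mulr_sumr !E !mulr0 addr0.
have expand j : norm2 (w j + c) ^+ 2 = norm2 (w j) ^+ 2 + 2 * dot2 c (w j) + norm2 c ^+ 2.
  by rewrite !norm2_sqr /dot2 !mxE; ring.
under [X in _ <= X]eq_bigr do rewrite expand.
by rewrite !big_split /= -mulr_sumr cross mulr0 addr0 lerDl sumr_ge0 // => j _; rewrite sqr_ge0.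
Qed.

Definition align_dist X Y s Q t : R := L2 (fun j => norm2 (col j X - Q *m col (s j) Y + t)).

Definition match_dist (A B : 'M[R]_(2, n)) s Q : R :=
  L2 (fun j => norm2 (col j A - Q *m col (s j) B)).

Lemma dGplusE X Y :
  dGplus X Y = inf [set r | exists s Q t, SO2 Q /\ r = align_dist X Y s Q t].
Proof.
have E s Q t : Num.sqrt (\sum_(j < n)
    (let v := col j X - Q *m col (s j) Y + t in v 0 0 ^+ 2 + v 1 0 ^+ 2)) = align_dist X Y s Q t.
  by congr Num.sqrt; apply: eq_bigr => j _; rewrite norm2_sqr.
by congr inf; apply/funext => r; apply/propext; split=> -[s [Q [t [SQ ->]]]];
  exists s, Q, t; rewrite E.
Qed.

Lemma align_dist_split X Y s Q t j :
  col j X - Q *m col (s j) Y + t =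
  (col j (centralize X) - Q *m col (s j) (centralize Y)) + (meanv X - Q *m meanv Y + t).
Proof.
rewrite !col_centralize; apply/matrixP => a b.
by rewrite !mxE !big_ord_recl !big_ord0 !mxE; ring.
Qed.

Lemma match_dist_centralize_le X Y s Q t : (0 < n)%N ->
  match_dist (centralize X) (centralize Y) s Q <= align_dist X Y s Q t.
Proof.
move=> n_gt0; rewrite /align_dist; under eq_fun do rewrite align_dist_split.
apply: L2_norm2_shift; rewrite sumrB -mulmx_sumr.
have -> : \sum_(j < n) col (s j) (centralize Y) = \sum_(j < n) col j (centralize Y).
  by rewrite [RHS](reindex_inj (@perm_inj _ s)).
by rewrite !sum_col_centralize // mulmx0 subr0.
Qed.

Lemma align_dist_mean X Y s Q :
  align_dist X Y s Q (Q *m meanv Y - meanv X) = match_dist (centralize X) (centralize Y) s Q.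
Proof.
rewrite /align_dist; under eq_fun do rewrite align_dist_split.
have -> : meanv X - Q *m meanv Y + (Q *m meanv Y - meanv X) = 0.
  by rewrite addrC addrA subrK subrr.
by under eq_fun do rewrite addr0.
Qed.

Lemma dGplus_le X Y s Q : SO2 Q -> dGplus X Y <= match_dist (centralize X) (centralize Y) s Q.
Proof.
move=> SQ; rewrite dGplusE -align_dist_mean; apply: ge_inf.
  by exists 0 => r [s' [Q' [t [_ ->]]]]; apply: L2_ge0.
by exists s, Q, (Q *m meanv Y - meanv X).
Qed.

Lemma dGplus_ge X Y (A : R) : (0 < n)%N ->
  (forall s Q, SO2 Q -> A <= match_dist (centralize X) (centralize Y) s Q) -> A <= dGplus X Y.
Proof.
move=> n_gt0 Acd; rewrite dGplusE; apply: lb_le_inf.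
  by exists (align_dist X Y 1%g 1%:M 0), 1%g, 1%:M, 0; split=> //; apply: SO2_1.
move=> r [s [Q [t [SQ ->]]]].
exact: le_trans (Acd s Q SQ) (match_dist_centralize_le _ _ _ _ t n_gt0).
Qed.

End Centering.

Section Features.
Variables (R : realType) (n : nat).
Implicit Types (A B : 'M[R]_(2, n)) (s : 'S_n) (Q : 'M[R]_2).

Definition pair_feat A (i : 'I_n) (j : 'I_n.-1) : 'rV[R]_3 :=
  vec3 (dot2 (col i A) (col (lift i j) A) / frob A)
       (dot2 (perp2 (col i A)) (col (lift i j) A) / frob A)
       (norm2 (col (lift i j) A)).

Lemma frobE A : frob A = L2 (fun j => norm2 (col j A)).
Proof.
rewrite /frob /L2; congr Num.sqrt; rewrite big_ord_recl big_ord1 -big_split /=.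
have -> : lift ord0 ord0 = 1 :> 'I_2 by apply/val_inj.
by apply: eq_bigr => j _; rewrite norm2_sqr !mxE.
Qed.

Lemma norm2_col_le_frob A j : norm2 (col j A) <= frob A.
Proof. by rewrite frobE; apply: le_trans (norm_le_L2 _ j); rewrite ler_norm. Qed.

Lemma frob_ge0 A : 0 <= frob A.
Proof. exact: sqrtr_ge0. Qed.

Lemma dist_frob_le A B s Q : SO2 Q -> `|frob A - frob B| <= match_dist A B s Q.
Proof.
move=> SQ; rewrite !frobE -(L2_perm (fun j => norm2 (col j B)) s).
apply: le_trans (dist_L2_le _ _) _.
by apply: ler_L2 => j; rewrite -(SO2_norm2 (col (s j) B) SQ) dist_norm2_le.
Qed.

Lemma pair_feat_dist_le A B s Q i : SO2 Q ->
  Num.max (normInf (vec1 (norm2 (col i A)) - vec1 (norm2 (col (s i) B))))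
          (Winf (pair_feat A i) (pair_feat B (s i))) <= 3 * match_dist A B s Q.
Proof.
move=> SQ; set D := match_dist A B s Q.
set x := fun j => col j A; set y := fun j => Q *m col (s j) B.
have D0 : 0 <= D := L2_ge0 _.
have xyD j : norm2 (x j - y j) <= D.
  by apply: le_trans (norm_le_L2 _ j); rewrite ler_norm.
have xF j : norm2 (x j) <= frob A := norm2_col_le_frob A j.
have yF j : norm2 (y j) <= frob B by rewrite /y SO2_norm2 ?norm2_col_le_frob.
have FD : `|frob A - frob B| <= D := dist_frob_le A B s SQ.
have normD j : `|norm2 (x j) - norm2 (col (s j) B)| <= D.
  by rewrite -(SO2_norm2 (col (s j) B) SQ); apply: le_trans (dist_norm2_le _ _) (xyD j).
rewrite ge_max normInf_vec1 (le_trans (normD i)) ?ler_peMl //=; last lra.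
have [sg sgE] := perm_unlift s i.
apply: (Winf_le (s := sg)) => [|j]; first lra.
rewrite /pair_feat sgE; apply: normInf_vec3_le.
- rewrite -(SO2_dot2 (col (s i) B) _ SQ).
  by apply: dist_scaled_dot2_le; rewrite ?frob_ge0 ?xF ?yF ?xyD.
- rewrite -(SO2_dot2_perp2 (col (s i) B) _ SQ).
  apply: dist_scaled_dot2_le; rewrite ?frob_ge0 ?norm2_perp2 -?perp2B ?norm2_perp2 ?xF ?yF ?xyD //.
- by apply: le_trans (normD _) _; lra.
Qed.

Lemma pair_feat_dist_ge A B (i0 : 'I_n) (sg : 'S_n.-1) s (w : R) :
  (forall j, normInf (pair_feat A i0 j - pair_feat B (s i0) (sg j)) <= w) ->
  (forall j, s (lift i0 j) = lift (s i0) (sg j)) ->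
  forall j, j != i0 ->
  `|dot2 (col i0 A) (col j A) / frob A - dot2 (col (s i0) B) (col (s j) B) / frob B| <= w /\
  `|dot2 (perp2 (col i0 A)) (col j A) / frob A -
    dot2 (perp2 (col (s i0) B)) (col (s j) B) / frob B| <= w.
Proof.
move=> close s_lift j; rewrite eq_sym => /unlift_some[j' -> _]; rewrite s_lift.
by have [] := normInf_vec3_ge (close j').
Qed.

End Features.

Lemma dist_rescaled_le (R : realFieldType) (F F' N M a a' dl k : R) :
  0 < N -> 0 < M -> 0 <= F -> F <= k * N -> 0 <= dl -> 1 <= k ->
  `|a - a'| <= dl -> `|a'| <= M -> `|M - N| <= dl -> `|F - F'| <= k * dl ->
  `|F * a - N / M * (F' * a')| <= 3 * k * N * dl.
Proof.
move=> N_gt0 M_gt0 F0 FkN dl0 k1 aa' a'M MN FF'.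
have -> : F * a - N / M * (F' * a') = F * (a - a') + (F * (M - N) + N * (F - F')) * (a' / M).
  by field; rewrite gt_eqF.
have a'M1 : `|a' / M| <= 1 by rewrite normrM normfV (gtr0_norm M_gt0) ler_pdivrMr // mul1r.
have Fdl : F * dl <= k * N * dl by rewrite ler_wpM2r.
have E1 : `|F * (a - a')| <= k * N * dl.
  by rewrite normrM (ger0_norm F0); apply: le_trans Fdl; rewrite ler_wpM2l.
have E2 : `|F * (M - N) + N * (F - F')| <= 2 * k * N * dl.
  apply: le_trans (ler_normD _ _) _; rewrite !normrM (ger0_norm F0) (gtr0_norm N_gt0).
  have : F * `|M - N| <= k * N * dl by apply: le_trans Fdl; rewrite ler_wpM2l.
  have : N * `|F - F'| <= N * (k * dl) by rewrite ler_wpM2l // ltW.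
  lra.
apply: le_trans (ler_normD _ _) _; rewrite [`|_ * (a' / M)|]normrM.
have : `|F * (M - N) + N * (F - F')| * `|a' / M| <= 2 * k * N * dl.
  by apply: le_trans E2; rewrite -[X in _ <= X]mulr1 ler_wpM2l.
lra.
Qed.

Section RigidFit.
Variable R : realType.
Variables (n : nat) (A B : 'M[R]_(2, n)) (dl : R) (tau s : 'S_n) (i0 : 'I_n).
Hypotheses (dl_ge0 : 0 <= dl)
  (norm_close : forall i, `|norm2 (col i A) - norm2 (col (tau i) B)| <= dl)
  (i0_max : forall i, norm2 (col i A) <= norm2 (col i0 A))
  (s_i0 : s i0 = tau i0)
  (dot_close : forall j, j != i0 ->
     `|dot2 (col i0 A) (col j A) / frob A - dot2 (col (s i0) B) (col (s j) B) / frob B| <= dl)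
  (perp_close : forall j, j != i0 ->
     `|dot2 (perp2 (col i0 A)) (col j A) / frob A -
       dot2 (perp2 (col (s i0) B)) (col (s j) B) / frob B| <= dl).

Lemma n_ge1 : 1 <= n%:R :> R.
Proof. by rewrite ler1n; case: (n) i0 => [[]|]. Qed.

Lemma rigid_fit_small : norm2 (col i0 A) <= dl -> forall j, norm2 (col j A - col (s j) B) <= 3 * dl.
Proof.
move=> small j; apply: le_trans (norm2D_le _ _) _; rewrite norm2N.
have := norm_close (tau^-1 (s j))%g; rewrite permKV ler_distl => /andP[Bsj _].
by have := i0_max j; have := i0_max (tau^-1 (s j))%g; lra.
Qed.

Lemma rigid_fit_large : dl < norm2 (col i0 A) ->
  exists2 Q, SO2 Q & forall j, norm2 (col j A - Q *m col (s j) B) <= 6 * n%:R * dl.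
Proof.
set N := norm2 (col i0 A); set M := norm2 (col (s i0) B).
move=> large; have N_gt0 : 0 < N := le_lt_trans dl_ge0 large.
have MN : `|M - N| <= dl by rewrite distrC /M s_i0 norm_close.
have M_gt0 : 0 < M by move: MN; rewrite ler_distl => /andP[MN1 _]; lra.
have FA_gt0 : 0 < frob A := lt_le_trans N_gt0 (norm2_col_le_frob A i0).
have FB_gt0 : 0 < frob B := lt_le_trans M_gt0 (norm2_col_le_frob B (s i0)).
have FAN : frob A <= n%:R * N.
  by rewrite frobE; apply: L2_le_const => [|j]; rewrite ?ger0_norm ?norm2_ge0.
have FAB : `|frob A - frob B| <= n%:R * dl.
  rewrite !frobE -(L2_perm (fun j => norm2 (col j B)) tau).
  by apply: le_trans (dist_L2_le _ _) _; apply: L2_le_const.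
have [Q [SQ Qdot Qperp]] := SO2_align N_gt0 M_gt0.
exists Q => // j; rewrite -(ler_pM2l N_gt0).
apply: le_trans (norm2_mul_sub_rot_le Qdot Qperp (col j A) (col (s j) B)) _.
have [->|j_i0] := eqVneq j i0.
  rewrite !dot2_self !dot2_perp2_self mulr0 subrr normr0 addr0 -/N -/M.
  have -> : N ^+ 2 - N / M * M ^+ 2 = N * (N - M) by field; rewrite gt_eqF.
  rewrite normrM (gtr0_norm N_gt0) ler_pM2l // distrC.
  apply: le_trans MN _; rewrite -[X in X <= _]mul1r; apply: ler_wpM2r => //.
  by have := n_ge1; lra.
(* Undoing the normalisation by [frob] costs a factor [3 n]. *)
have rescale (u v : 'cV[R]_2) : norm2 v = M ->
    `|dot2 u (col j A) / frob A - dot2 v (col (s j) B) / frob B| <= dl ->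
    `|dot2 u (col j A) - N / M * dot2 v (col (s j) B)| <= 3 * n%:R * N * dl.
  move=> vM close.
  have := dist_rescaled_le N_gt0 M_gt0 (ltW FA_gt0) FAN dl_ge0 n_ge1 close _ MN FAB.
  rewrite [frob A * _]mulrC [frob B * _]mulrC !divfK ?gt_eqF //; apply.
  rewrite dot2C -vM; apply: norm_dot2_div_le; first exact: ltW.
  exact: norm2_col_le_frob.
have := rescale _ _ (erefl M) (dot_close j_i0).
have := rescale _ _ (norm2_perp2 _) (perp_close j_i0).
lra.
Qed.

Lemma rigid_fit :
  exists2 Q, SO2 Q & forall j, norm2 (col j A - Q *m col (s j) B) <= 6 * n%:R * dl.
Proof.
have [large|small] := ltrP dl (norm2 (col i0 A)); first exact: rigid_fit_large.
exists 1%:M => [|j]; first exact: SO2_1.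
rewrite mul1mx; apply: le_trans (rigid_fit_small small j) _; apply: ler_wpM2r => //.
by have := n_ge1; lra.
Qed.

End RigidFit.

Lemma match_dist_le_feat_dist (R : realType) n (A B : 'M[R]_(2, n)) (tau : 'S_n) (dl : R) :
  (0 < n)%N -> 0 <= dl ->
  (forall i, Num.max (normInf (vec1 (norm2 (col i A)) - vec1 (norm2 (col (tau i) B))))
                     (Winf (pair_feat A i) (pair_feat B (tau i))) <= dl) ->
  exists s Q, SO2 Q /\ match_dist A B s Q <= 6 * n%:R ^+ 2 * dl.
Proof.
move=> n_gt0 dl_ge0 close.
have normD i : `|norm2 (col i A) - norm2 (col (tau i) B)| <= dl.
  by have := close i; rewrite ge_max normInf_vec1 => /andP[].
have [i0 _ i0_max] := @arg_maxP _ _ 'I_n (Ordinal n_gt0) xpredT (fun i => norm2 (col i A)) isT.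
have [sg sgE] := Winf_attained (pair_feat A i0) (pair_feat B (tau i0)).
have [s [s_i0 s_lift]] := perm_lift i0 (tau i0) sg.
have pairD j : normInf (pair_feat A i0 j - pair_feat B (s i0) (sg j)) <= dl.
  by rewrite s_i0; apply: le_trans (sgE j) _; have := close i0; rewrite ge_max => /andP[].
rewrite -s_i0 in s_lift.
have [Q SQ fit] := rigid_fit dl_ge0 normD (fun i => i0_max i isT) s_i0
  (fun j ji0 => (pair_feat_dist_ge pairD s_lift ji0).1)
  (fun j ji0 => (pair_feat_dist_ge pairD s_lift ji0).2).
exists s, Q; split=> //; rewrite (_ : _ * dl = n%:R * (6 * n%:R * dl)); last by ring.
apply: L2_le_const => [|j]; first by rewrite mulr_ge0 // mulr_ge0.
by rewrite ger0_norm ?norm2_ge0 ?fit.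
Qed.

Lemma scale2_fixed_eq0 (F : numFieldType) (V : lmodType F) (x : V) : 2 *: x = x -> x = 0.
Proof. by move/eqP; rewrite -subr_eq0 -{2}[x]scale1r -scalerBl addrK scale1r => /eqP. Qed.

Section Invariant.
Variables (R : realType) (n d m : nat).
Variable psi : 'rV[R]_1 -> ('I_n.-1 -> 'rV[R]_3) -> 'rV[R]_d.
Variable phi : ('I_n -> 'rV[R]_d) -> 'rV[R]_m.
Hypotheses (psi_hom : psi_homogeneous psi) (phi_hom : phi_homogeneous phi).

Lemma psi_homogeneous0 : psi 0 (fun _ => 0) = 0.
Proof.
apply: scale2_fixed_eq0; rewrite -psi_hom ?ltr0n // scaler0.
by congr psi; apply/funext => j; rewrite scaler0.
Qed.

Lemma phi_homogeneous0 : phi (fun _ => 0) = 0.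
Proof.
apply: scale2_fixed_eq0; rewrite -phi_hom ?ltr0n //.
by congr phi; apply/funext => i; rewrite scaler0.
Qed.

Lemma HmapE X : let Xb := centralize X in
  Hmap psi phi X = phi (fun i => psi (vec1 (norm2 (col i Xb))) (pair_feat Xb i)).
Proof.
rewrite /Hmap; case: eqP => // ->; rewrite -[LHS]phi_homogeneous0 -psi_homogeneous0.
congr phi; apply/funext => i; rewrite col0 norm2_0.
have -> : vec1 0 = 0 :> 'rV[R]_1 by apply/matrixP => a b; rewrite !mxE.
congr psi; apply/funext => j; rewrite /pair_feat !col0 norm2_0 /dot2 !mxE.
rewrite !mul0r oppr0 !mul0r !addr0 !mul0r.
by apply/matrixP => a b; rewrite !mxE; case: ifP => //; case: ifP.
Qed.

Hypothesis n_gt0 : (0 < n)%N.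

Lemma Hmap_le (Cps Cph : R) :
  (forall v v' S S',
     normInf (psi v S - psi v' S') <= Cps * Num.max (normInf (v - v')) (Winf S S')) ->
  (forall S S', normInf (phi S - phi S') <= Cph * Winf S S') ->
  0 < Cps -> 0 < Cph ->
  forall X Y, normInf (Hmap psi phi X - Hmap psi phi Y) <= 3 * Cph * Cps * dGplus X Y.
Proof.
move=> psiC phiC Cps_gt0 Cph_gt0 X Y; have K_gt0 : 0 < 3 * Cph * Cps by rewrite !mulr_gt0.
rewrite -ler_pdivrMl //; apply: dGplus_ge => [//|s Q SQ]; rewrite ler_pdivrMl // !HmapE.
set D := match_dist _ _ s Q; rewrite (_ : _ * D = Cph * Cps * (3 * D)); last by ring.
apply: (@two_level_le R n 1 n.-1 3 d m psi phi _ _ _ _ Cph Cps (3 * D) s) => //.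
- exact: ltW.
- exact: ltW.
- by rewrite mulr_ge0 ?L2_ge0.
- by move=> i; apply: pair_feat_dist_le.
Qed.

Lemma Hmap_ge (cps cph : R) :
  (forall v v' S S',
     cps * Num.max (normInf (v - v')) (Winf S S') <= normInf (psi v S - psi v' S')) ->
  (forall S S', cph * Winf S S' <= normInf (phi S - phi S')) ->
  0 < cps -> 0 < cph ->
  forall X Y, cph * cps * dGplus X Y <= 6 * n%:R ^+ 2 * normInf (Hmap psi phi X - Hmap psi phi Y).
Proof.
move=> psic phic cps_gt0 cph_gt0 X Y; have c_gt0 : 0 < cph * cps by rewrite mulr_gt0.
rewrite !HmapE; set Xb := centralize X; set Yb := centralize Y.
set eps := normInf (phi _ - phi _); set dl := eps / (cph * cps).
have dl_ge0 : 0 <= dl by rewrite divr_ge0 ?normInf_ge0 ?ltW.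
have [tau tauE] := two_level_ge (fun i => vec1 (norm2 (col i Xb)))
  (fun i => vec1 (norm2 (col i Yb))) (pair_feat Xb) (pair_feat Yb) phic cph_gt0 psic.
case: (match_dist_le_feat_dist (A := Xb) (B := Yb) (tau := tau) n_gt0 dl_ge0)
  => [i | s [Q [SQ fit]]].
  by rewrite ler_pdivlMr // mulrC -mulrA tauE.
have -> : 6 * n%:R ^+ 2 * eps = cph * cps * (6 * n%:R ^+ 2 * dl).
  by rewrite /dl; field; rewrite !gt_eqF.
by rewrite ler_pM2l //; apply: le_trans (dGplus_le X Y s SQ) fit.
Qed.

End Invariant.

Unset Implicit Arguments.

Theorem theorem4 (R : realType) (n d m : nat)
    (psi : 'rV[R]_1 -> ('I_n.-1 -> 'rV[R]_3) -> 'rV[R]_d)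
    (phi : ('I_n -> 'rV[R]_d) -> 'rV[R]_m) :
  (2 <= n)%N ->
  psi_homogeneous psi -> psi_biLipschitz psi ->
  phi_homogeneous phi -> phi_biLipschitz phi ->
  exists a b : R, 0 < a /\ a <= b /\
    forall X Y : 'M[R]_(2, n),
      a * dGplus X Y <= normInf (Hmap psi phi X - Hmap psi phi Y) /\
      normInf (Hmap psi phi X - Hmap psi phi Y) <= b * dGplus X Y.
Proof.
move=> n_ge2 psi_hom [cps [Cps [cps_gt0 [cpsC psi_bi]]]].
move=> phi_hom [cph [Cph [cph_gt0 [cphC phi_bi]]]].
have n_gt0 : (0 < n)%N := ltnW n_ge2.
have Cps_gt0 : 0 < Cps := lt_le_trans cps_gt0 cpsC.
have Cph_gt0 : 0 < Cph := lt_le_trans cph_gt0 cphC.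
have K_gt0 : 0 < 6 * n%:R ^+ 2 :> R by rewrite mulr_gt0 // exprn_gt0 // ltr0n.
have K_ge1 : 1 <= 6 * n%:R ^+ 2 :> R.
  by rewrite -natrX -natrM ler1n muln_gt0 expn_gt0 n_gt0.
exists (cph * cps / (6 * n%:R ^+ 2)), (3 * Cph * Cps); split; [|split].
- by rewrite divr_gt0 // mulr_gt0.
- rewrite ler_pdivrMr //; have : cph * cps <= Cph * Cps by rewrite ler_pM // ltW.
  by have := mulr_gt0 Cph_gt0 Cps_gt0; nra.
move=> X Y; split.
- rewrite mulrAC ler_pdivrMr // [_ * (6 * _)]mulrC.
  apply: (Hmap_ge psi_hom phi_hom n_gt0) => // [v v' S S'|S S'].
  + exact: (psi_bi v v' S S').1.
  + exact: (phi_bi S S').1.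
- apply: (Hmap_le psi_hom phi_hom n_gt0) => // [v v' S S'|S S'].
  + exact: (psi_bi v v' S S').2.
  + exact: (phi_bi S S').2.
Qed.
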